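(* Consider a Hex region that is completely filled with black and white stones. Changing the color of a single stone from black to white increases the number of connected components of Black's stones by at most 2.
   Context: A Hex region is a set of hexagonal cells with the usual hexagonal adjacency (each cell has at most six neighbors). Connected components of Black's stones are the maximal sets of black-occupied cells connected through chains of adjacent black cells. *)

From mathcomp Require Import all_boot all_order all_algebra.
Set Implicit Arguments. Unset Strict Implicit. Unset Printing Implicit Defensive.
Import GRing.Theory Num.Theory.
Local Open Scope ring_scope.

(* Hexagonal cells in axial coordinates (a, b) : int * int.  The six
   neighbours of (a, b) are (a+-1, b), (a, b+-1), (a+1, b-1), (a-1, b+1). *)
Definition hex_adj (p q : int * int) : bool :=
  let da := q.1 - p.1 in
  let db := q.2 - p.2 in
  [|| (da == 1) && (db == 0), (da == -1) && (db == 0),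
      (da == 0) && (db == 1), (da == 0) && (db == -1),
      (da == 1) && (db == -1) | (da == -1) && (db == 1)].

(* A Hex region: a finite type T of cells, embedded injectively into the
   hexagonal grid by pos; adjacency is grid adjacency of the positions. *)
Definition cell_adj (T : finType) (pos : T -> int * int) : rel T :=
  fun x y => hex_adj (pos x) (pos y).

Definition adj_in (T : finType) (pos : T -> int * int) (S : {set T}) : rel T :=
  fun x y => [&& x \in S, y \in S & cell_adj pos x y].

Definition component (T : finType) (pos : T -> int * int) (S : {set T}) (x : T)
  : {set T} := [set y | connect (adj_in pos S) x y].

Definition n_components (T : finType) (pos : T -> int * int) (S : {set T}) : nat :=
  #|[set component pos S x | x in S]|.

From mathcomp Require Import all_boot all_order all_algebra.
Set Implicit Arguments. Unset Strict Implicit. Unset Printing Implicit Defensive.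
Import GRing.Theory.

(* Removing v from B leaves every B-component other than that of v intact, and
   splits the component of v into pieces each of which contains a neighbour
   of v.  The six hexagonal neighbours of a cell form three pairs of adjacent
   cells, so these pieces number at most three: one component is replaced by
   at most three. *)

Lemma card_imset_le_fibres (aT rT I : finType) (f : aT -> rT) (g : aT -> I)
    (D : {pred aT}) :
  {in D &, forall x y, g x = g y -> f x = f y} -> #|f @: D| <= #|I|.
Proof.
move=> fg; have [x0 Dx0 | D0] := pickP D; last first.
  by rewrite (leq_trans (leq_imset_card f D)) // eq_card0.
pose h i := f (odflt x0 [pick x in D | g x == i]).
have h_le : #|h @: [set: I]| <= #|I| by rewrite -[X in _ <= X]cardsT leq_imset_card.
apply: leq_trans h_le; apply/subset_leq_card/subsetP=> _ /imsetP[x Dx ->].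
apply/imsetP; exists (g x) => //.
rewrite /h; case: pickP => [y /andP[Dy /eqP gyx] | /(_ x)]; first exact: fg.
by rewrite Dx eqxx.
Qed.

Section InducedComponents.
Variables (T : finType) (e : rel T).
Hypothesis e_sym : symmetric e.

Definition induced (S : {set T}) : rel T :=
  fun x y => [&& x \in S, y \in S & e x y].

Definition induced_component (S : {set T}) (x : T) : {set T} :=
  [set y | connect (induced S) x y].

Definition n_induced_components (S : {set T}) : nat :=
  #|[set induced_component S x | x in S]|.

Lemma induced_sym (S : {set T}) : symmetric (induced S).
Proof. by move=> x y; rewrite /induced e_sym andbCA. Qed.

Lemma induced_component_id (S : {set T}) (x : T) : x \in induced_component S x.
Proof. by rewrite inE connect0. Qed.

Lemma induced_component_eq (S : {set T}) (x y : T) :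
  connect (induced S) x y -> induced_component S x = induced_component S y.
Proof.
move=> cxy; apply/setP=> z; rewrite !inE.
exact: (same_connect (sym_connect_sym (induced_sym S)) cxy).
Qed.

Lemma connect_induced_sub (S S' : {set T}) (x y : T) :
  S \subset S' -> connect (induced S) x y -> connect (induced S') x y.
Proof.
move=> sSS'; apply: connect_sub => a b /and3P[aS bS ab].
by apply: connect1; rewrite /induced (subsetP sSS' _ aS) (subsetP sSS' _ bS).
Qed.

Variables (B : {set T}) (v : T).

Lemma path_induced_setD1 (x : T) (p : seq T) :
  v \notin x :: p -> path (induced B) x p -> path (induced (B :\ v)) x p.
Proof.
move=> vNp; apply: (@sub_in_path _ (predC1 v)); last first.
  by apply/allP=> y /=; apply: contraTneq => ->.
move=> a b /[!inE] av bv /and3P[aB bB ab].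
by rewrite /induced !inE av bv aB bB ab.
Qed.

Lemma induced_component_setD1_disconnected (x : T) :
  x \in B :\ v -> ~~ connect (induced B) v x ->
  induced_component (B :\ v) x = induced_component B x.
Proof.
move=> xBv nvx; apply/setP=> y; rewrite !inE; apply/idP/idP.
  by apply: connect_induced_sub; rewrite subD1set.
case/connectP=> p xp ->{y}; apply/connectP; exists p => //.
have vNp : v \notin x :: p.
  apply: contra nvx => /(path_connect xp).
  by rewrite (sym_connect_sym (induced_sym B)).
exact: path_induced_setD1 vNp xp.
Qed.

Definition neighbours_in := [set w in B :\ v | e v w].

Lemma connect_setD1_neighbour (x : T) :
  x \in B :\ v -> connect (induced B) v x ->
  exists2 w, w \in neighbours_in & connect (induced (B :\ v)) w x.
Proof.
move=> xBv /connectP[p vp xE]; rewrite {x}xE in xBv *.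
case: (shortenP vp) xBv => -[|w q] /= vwq uvwq _; first by rewrite !inE eqxx.
case/andP: vwq => /and3P[_ wB vw] wq _.
have vNwq : v \notin w :: q by case/andP: uvwq.
exists w; last by apply/connectP; exists q => //; apply: path_induced_setD1 vNwq wq.
rewrite !inE wB vw !andbT; apply: contraNneq vNwq => ->; exact: mem_head.
Qed.

Lemma n_induced_components_setD1 (I : finType) (g : T -> I) :
  v \in B ->
  {in neighbours_in &, forall w w',
     g w = g w' -> connect (induced (B :\ v)) w w'} ->
  n_induced_components (B :\ v) + 1 <= n_induced_components B + #|I|.
Proof.
move=> vB gN.
set far := [set induced_component B x
             | x in [pred x in B :\ v | ~~ connect (induced B) v x]].
set near := [set induced_component (B :\ v) w | w in neighbours_in].
have far_near :
    [set induced_component (B :\ v) x | x in B :\ v] \subset far :|: near.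
  apply/subsetP=> _ /imsetP[x xBv ->]; rewrite inE.
  have [vx | nvx] := boolP (connect (induced B) v x).
    have [w wN wx] := connect_setD1_neighbour xBv vx.
    by rewrite -(induced_component_eq wx) imset_f ?orbT.
  by rewrite induced_component_setD1_disconnected // imset_f // inE xBv.
have far_lt : #|far| < n_induced_components B.
  apply/proper_card/(sub_proper_trans _ (properD1 (imset_f _ vB))).
  apply/subsetP=> _ /imsetP[x /andP[xBv nvx] ->].
  rewrite !inE imset_f ?andbT; last by case/setD1P: xBv.
  apply: contra nvx => /eqP xv; have := induced_component_id B x.
  by rewrite xv inE.
have near_le : #|near| <= #|I|.
  apply: (card_imset_le_fibres (g := g)) => w w' wN w'N gw.
  exact/induced_component_eq/gN.
rewrite /n_induced_components addn1.
apply: leq_trans (leq_add far_lt near_le).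
by rewrite ltnS (leq_trans (subset_leq_card far_near)) ?leq_card_setU.
Qed.

End InducedComponents.

Local Open Scope ring_scope.

Lemma hex_adj_sym (p q : int * int) : hex_adj p q = hex_adj q p.
Proof.
wlog suff: p q / hex_adj p q -> hex_adj q p.
  by move=> pq; apply/idP/idP; apply: pq.
case: p q => [a b] [c d]; rewrite /hex_adj /= -(opprB c a) -(opprB d b).
by repeat case/orP; case/andP => /eqP -> /eqP ->.
Qed.

(* Sectors 0, 1, 2 pair the consecutive neighbours p + (1,0), p + (0,1);
   p + (-1,1), p + (-1,0); p + (0,-1), p + (1,-1).  All other cells fall into
   sector 2. *)
Definition hex_sector (p q : int * int) : 'I_3 :=
  let da := q.1 - p.1 in let db := q.2 - p.2 in
  if ((da == 1) && (db == 0)) || ((da == 0) && (db == 1)) then @Ordinal 3 0 isT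
  else if ((da == -1) && (db == 1)) || ((da == -1) && (db == 0)) then @Ordinal 3 1 isT
  else @Ordinal 3 2 isT.

Lemma hex_adj_same_sector (p q q' : int * int) :
  hex_adj p q -> hex_adj p q' -> hex_sector p q = hex_sector p q' -> q != q' ->
  hex_adj q q'.
Proof.
case: p q q' => [c d] [a b] [a' b'].
have sub_shift (x x' y : int) : x' - x = (x' - y) - (x - y).
  by rewrite opprB addrA subrK.
rewrite /hex_adj /hex_sector /= (sub_shift a a' c) (sub_shift b b' d) xpair_eqE.
rewrite -(inj_eq (addIr (- c)) a a') -(inj_eq (addIr (- d)) b b').
move: (a - c) (b - d) (a' - c) (b' - d) => x y x' y'.
by repeat case/orP; case/andP => /eqP -> /eqP ->;
   repeat case/orP; case/andP => /eqP -> /eqP ->.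
Qed.

Lemma cell_adj_sym (T : finType) (pos : T -> int * int) :
  symmetric (cell_adj pos).
Proof. by move=> x y; apply: hex_adj_sym. Qed.

Theorem lemma11p3 (T : finType) (pos : T -> int * int) (B : {set T}) (v : T) :
  injective pos -> v \in B ->
  (n_components pos (B :\ v) <= n_components pos B + 2)%N.
Proof.
move=> pos_inj vB.
have sector_clique : {in neighbours_in (cell_adj pos) B v &, forall w w',
    hex_sector (pos v) (pos w) = hex_sector (pos v) (pos w') ->
    connect (induced (cell_adj pos) (B :\ v)) w w'}.
  move=> w w' /setIdP[wBv vw] /setIdP[w'Bv vw'] same_sector.
  have [<- | ww'] := eqVneq w w'; first exact: connect0.
  apply: connect1; rewrite /induced wBv w'Bv.
  by apply: hex_adj_same_sector vw vw' same_sector _; rewrite (inj_eq pos_inj).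
have := n_induced_components_setD1 (cell_adj_sym pos) vB sector_clique.
by rewrite card_ord addn1 addnS ltnS.
Qed.
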